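(* Let $\mathbf{M}^2$ be a connected smooth oriented surface and $\alpha:\mathbf{M}^2\to\mathbf{R}^4$ a smooth immersion with globally defined orthogonal asymptotic lines. Suppose that $\alpha$ has constant projection with distance of projection $r>0$, i.e. there exists a unit normal vector field $\nu$ along $\alpha$ such that $\langle II(p,v),\nu(p)\rangle = r\, I(p,v)$ for all $p\in\mathbf{M}^2$ and $v\in T_p\mathbf{M}$ (equivalently, for each $p$ the orthogonal projection of the ellipse of curvature $\varepsilon_\alpha(p)$ onto the $\nu(p)$-axis is the single point $r\nu(p)$). Suppose moreover that the Gaussian curvature satisfies $K(p)\neq r^2$ for all $p\in\mathbf{M}^2$. Then $\alpha$ is hyperspherical; more precisely, $\alpha(\mathbf{M}^2)$ is contained in a hypersphere of $\mathbf{R}^4$ of radius $1/r$.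
   Context: For an immersion $\alpha:\mathbf{M}^2\to\mathbf{R}^4$ and a local chart $(u,v)$, $E=\langle\alpha_u,\alpha_u\rangle$, $F=\langle\alpha_u,\alpha_v\rangle$, $G=\langle\alpha_v,\alpha_v\rangle$ and $I=E\,du^2+2F\,du\,dv+G\,dv^2$. For an orthonormal normal frame $\{\nu_1,\nu_2\}$, $e_i=\langle\alpha_{uu},\nu_i\rangle$, $f_i=\langle\alpha_{uv},\nu_i\rangle$, $g_i=\langle\alpha_{vv},\nu_i\rangle$, $II_{\nu_i}=e_i\,du^2+2f_i\,du\,dv+g_i\,dv^2$, and $II=II_{\nu_1}\nu_1+II_{\nu_2}\nu_2$. The Gaussian curvature is $K=\frac{e_1g_1-f_1^2+e_2g_2-f_2^2}{EG-F^2}$. The normal curvature vector is $\eta(p,v)=II(p,v)/I(p,v)$ and the ellipse of curvature $\varepsilon_\alpha(p)$ is the image of the unit tangent circle under $\eta(p,\cdot)$. A point is an inflection point if the ellipse of curvature there is a radial line segment (a segment contained in a line through the origin of $N_p\mathbf{M}$), equivalently $k_N(p)=0$ and $\Delta(p)=0$ where $k_N=\frac{E(f_1g_2-f_2g_1)-F(e_1g_2-e_2g_1)+G(e_1f_2-e_2f_1)}{2(EG-F^2)}$ and $\Delta$ is $\frac{1}{4(EG-F^2)}$ times the resultant determinant of $II_{\nu_1},II_{\nu_2}$. The asymptotic lines are the integral curves of the quadratic differential equation $(e_1f_2-e_2f_1)du^2+(e_1g_2-e_2g_1)du\,dv+(f_1g_2-f_2g_1)dv^2=0$ (equivalently $\mathrm{Jac}(II_{\nu_1},II_{\nu_2})=0$,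 Jacobian with respect to $(du,dv)$); geometrically, they are the directions whose normal curvature vectors are tangent lines from the origin of $N_p\mathbf{M}$ to $\varepsilon_\alpha(p)$; their singularities are the inflection points. ''Globally defined orthogonal asymptotic lines'' means the two asymptotic directions are defined away from inflection points on all of $\mathbf{M}^2$ and are orthogonal. An immersion is hyperspherical if its image is contained in a hypersphere (round $3$-sphere) of $\mathbf{R}^4$. *)

From Stdlib Require Import Reals.
From Coquelicot Require Import Coquelicot.
Open Scope R_scope.

Definition R2 := (R * R)%type.

Record R4 := mkR4 { c0 : R; c1 : R; c2 : R; c3 : R }.

Definition dot4 (x y : R4) : R :=
  c0 x * c0 y + c1 x * c1 y + c2 x * c2 y + c3 x * c3 y.
Definition sub4 (x y : R4) : R4 :=
  mkR4 (c0 x - c0 y) (c1 x - c1 y) (c2 x - c2 y) (c3 x - c3 y).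
Definition norm4 (x : R4) : R := sqrt (dot4 x x).

Definition pdu (g : R2 -> R) (p : R2) : R := Derive (fun t => g (t, snd p)) (fst p).
Definition pdv (g : R2 -> R) (p : R2) : R := Derive (fun t => g (fst p, t)) (snd p).

Fixpoint Ck (k : nat) (U : R2 -> Prop) (g : R2 -> R) : Prop :=
  match k with
  | O => forall p, U p -> continuous g p
  | S k' =>
      (forall p, U p -> ex_derive (fun t => g (t, snd p)) (fst p)
                     /\ ex_derive (fun t => g (fst p, t)) (snd p))
      /\ Ck k' U (pdu g) /\ Ck k' U (pdv g)
  end.

Definition smooth_on (U : R2 -> Prop) (g : R2 -> R) : Prop := forall k, Ck k U g.

Definition smooth2_on (U : R2 -> Prop) (f : R2 -> R2) : Prop :=
  smooth_on U (fun p => fst (f p)) /\ smooth_on U (fun p => snd (f p)).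

Definition smooth4_on (U : R2 -> Prop) (f : R2 -> R4) : Prop :=
  smooth_on U (fun p => c0 (f p)) /\ smooth_on U (fun p => c1 (f p)) /\
  smooth_on U (fun p => c2 (f p)) /\ smooth_on U (fun p => c3 (f p)).

Definition jac2 (f : R2 -> R2) (p : R2) : R :=
  pdu (fun q => fst (f q)) p * pdv (fun q => snd (f q)) p
  - pdv (fun q => fst (f q)) p * pdu (fun q => snd (f q)) p.

Definition Du (X : R2 -> R4) (p : R2) : R4 :=
  mkR4 (pdu (fun q => c0 (X q)) p) (pdu (fun q => c1 (X q)) p)
       (pdu (fun q => c2 (X q)) p) (pdu (fun q => c3 (X q)) p).
Definition Dv (X : R2 -> R4) (p : R2) : R4 :=
  mkR4 (pdv (fun q => c0 (X q)) p) (pdv (fun q => c1 (X q)) p)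
       (pdv (fun q => c2 (X q)) p) (pdv (fun q => c3 (X q)) p).

(* A surface is a type M with charts phi i : U i -> M (U i open in R^2),
   indexed by nat (countable atlas, i.e. second countable). *)

Definition chart_domain_overlap {M : Type} (U : nat -> R2 -> Prop)
  (phi : nat -> R2 -> M) (i j : nat) (p : R2) : Prop :=
  U i p /\ exists q, U j q /\ phi j q = phi i p.

Definition M_open {M : Type} (U : nat -> R2 -> Prop) (phi : nat -> R2 -> M)
  (S : M -> Prop) : Prop :=
  forall i, open (fun p => U i p /\ S (phi i p)).

Definition smooth_oriented_surface {M : Type} (U : nat -> R2 -> Prop)
  (phi : nat -> R2 -> M) : Prop :=
  (forall i, open (U i)) /\
  (forall i p q, U i p -> U i q -> phi i p = phi i q -> p = q) /\
  (forall x : M, exists i p, U i p /\ phi i p = x) /\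
  (forall i j, open (chart_domain_overlap U phi i j)) /\
  (* smooth, orientation-preserving transition maps *)
  (forall i j, exists tau : R2 -> R2,
      (forall p, chart_domain_overlap U phi i j p ->
                 U j (tau p) /\ phi j (tau p) = phi i p) /\
      smooth2_on (chart_domain_overlap U phi i j) tau /\
      (forall p, chart_domain_overlap U phi i j p -> jac2 tau p > 0)) /\
  (forall x y : M, x <> y -> exists A B : M -> Prop,
      M_open U phi A /\ M_open U phi B /\ A x /\ B y /\
      (forall z, ~ (A z /\ B z))).

Definition M_connected {M : Type} (U : nat -> R2 -> Prop) (phi : nat -> R2 -> M) : Prop :=
  forall S : M -> Prop, M_open U phi S -> M_open U phi (fun x => ~ S x) ->
    (forall x, S x) \/ (forall x, ~ S x).

Definition smooth_immersion {M : Type} (U : nat -> R2 -> Prop) (phi : nat -> R2 -> M)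
  (alpha : M -> R4) : Prop :=
  forall i, smooth4_on (U i) (fun p => alpha (phi i p)) /\
    forall p, U i p ->
      let X := fun q => alpha (phi i q) in
      dot4 (Du X p) (Du X p) * dot4 (Dv X p) (Dv X p) - (dot4 (Du X p) (Dv X p))^2 > 0.

Section Local.
Variable X : R2 -> R4.
Variable p : R2.

Definition fE := dot4 (Du X p) (Du X p).
Definition fF := dot4 (Du X p) (Dv X p).
Definition fG := dot4 (Dv X p) (Dv X p).
Definition Xuu := Du (Du X) p.
Definition Xuv := Dv (Du X) p.
Definition Xvv := Dv (Dv X) p.

Definition Ibil (w1 w2 : R2) : R :=
  fE * fst w1 * fst w2 + fF * (fst w1 * snd w2 + snd w1 * fst w2) + fG * snd w1 * snd w2.

Definition normal_frame (n1 n2 : R4) : Prop :=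
  dot4 n1 n1 = 1 /\ dot4 n2 n2 = 1 /\ dot4 n1 n2 = 0 /\
  dot4 n1 (Du X p) = 0 /\ dot4 n1 (Dv X p) = 0 /\
  dot4 n2 (Du X p) = 0 /\ dot4 n2 (Dv X p) = 0.

Variables n1 n2 : R4.
Definition e1 := dot4 Xuu n1.  Definition f1 := dot4 Xuv n1.  Definition g1 := dot4 Xvv n1.
Definition e2 := dot4 Xuu n2.  Definition f2 := dot4 Xuv n2.  Definition g2 := dot4 Xvv n2.

Definition gauss_K : R :=
  (e1 * g1 - f1 ^ 2 + e2 * g2 - f2 ^ 2) / (fE * fG - fF ^ 2).

Definition normal_curv_kN : R :=
  (fE * (f1 * g2 - f2 * g1) - fF * (e1 * g2 - e2 * g1) + fG * (e1 * f2 - e2 * f1))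
  / (2 * (fE * fG - fF ^ 2)).

End Local.

Definition det3 (a b c d e f g h i : R) : R :=
  a * (e * i - f * h) - b * (d * i - f * g) + c * (d * h - e * g).

Definition det4 (a11 a12 a13 a14 a21 a22 a23 a24 a31 a32 a33 a34 a41 a42 a43 a44 : R) : R :=
  a11 * det3 a22 a23 a24 a32 a33 a34 a42 a43 a44
  - a12 * det3 a21 a23 a24 a31 a33 a34 a41 a43 a44
  + a13 * det3 a21 a22 a24 a31 a32 a34 a41 a42 a44
  - a14 * det3 a21 a22 a23 a31 a32 a33 a41 a42 a43.

Definition Delta (X : R2 -> R4) (p : R2) (n1 n2 : R4) : R :=
  let a1 := e1 X p n1 in let b1 := f1 X p n1 in let d1 := g1 X p n1 in
  let a2 := e2 X p n2 in let b2 := f2 X p n2 in let d2 := g2 X p n2 in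
  / (4 * (fE X p * fG X p - fF X p ^ 2)) *
  det4 a1 (2 * b1) d1 0
       a2 (2 * b2) d2 0
       0 a1 (2 * b1) d1
       0 a2 (2 * b2) d2.

Definition inflection_pt (X : R2 -> R4) (p : R2) (n1 n2 : R4) : Prop :=
  normal_curv_kN X p n1 n2 = 0 /\ Delta X p n1 n2 = 0.

Definition asympt_Q (X : R2 -> R4) (p : R2) (n1 n2 : R4) (w : R2) : R :=
  let a1 := e1 X p n1 in let b1 := f1 X p n1 in let d1 := g1 X p n1 in
  let a2 := e2 X p n2 in let b2 := f2 X p n2 in let d2 := g2 X p n2 in
  (a1 * b2 - a2 * b1) * fst w ^ 2 + (a1 * d2 - a2 * d1) * fst w * snd w
  + (b1 * d2 - b2 * d1) * snd w ^ 2.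

(* globally defined orthogonal asymptotic lines: at every point (in every chart,
   for every orthonormal normal frame) the point is not an inflection point and
   there are exactly two asymptotic directions, which are I-orthogonal. *)
Definition global_orthogonal_asymptotic_lines {M : Type} (U : nat -> R2 -> Prop)
  (phi : nat -> R2 -> M) (alpha : M -> R4) : Prop :=
  forall i p n1 n2, U i p ->
    let X := fun q => alpha (phi i q) in
    normal_frame X p n1 n2 ->
    ~ inflection_pt X p n1 n2 /\
    exists w1 w2 : R2, w1 <> (0, 0) /\ w2 <> (0, 0) /\
      asympt_Q X p n1 n2 w1 = 0 /\ asympt_Q X p n1 n2 w2 = 0 /\
      Ibil X p w1 w2 = 0 /\
      (forall w : R2, asympt_Q X p n1 n2 w = 0 ->
         exists t : R, w = (t * fst w1, t * snd w1) \/ w = (t * fst w2, t * snd w2)).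

Definition constant_projection {M : Type} (U : nat -> R2 -> Prop)
  (phi : nat -> R2 -> M) (alpha : M -> R4) (r : R) : Prop :=
  exists nu : M -> R4,
    forall i, smooth4_on (U i) (fun q => nu (phi i q)) /\
    forall p, U i p ->
      let X := fun q => alpha (phi i q) in
      let n := nu (phi i p) in
      dot4 n n = 1 /\ dot4 n (Du X p) = 0 /\ dot4 n (Dv X p) = 0 /\
      forall du dv : R,
        dot4 (Xuu X p) n * du ^ 2 + 2 * dot4 (Xuv X p) n * du * dv
        + dot4 (Xvv X p) n * dv ^ 2
        = r * (fE X p * du ^ 2 + 2 * fF X p * du * dv + fG X p * dv ^ 2).

Definition gauss_curv_ne {M : Type} (U : nat -> R2 -> Prop)
  (phi : nat -> R2 -> M) (alpha : M -> R4) (k : R) : Prop :=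
  forall i p n1 n2, U i p ->
    let X := fun q => alpha (phi i q) in
    normal_frame X p n1 n2 -> gauss_K X p n1 n2 <> k.

(* The unit normal field N with <II, N> = r I satisfies dN = -r dX.  Differentiating
   N.X_u = N.X_v = 0 and N.N = 1 shows that N_u + r X_u and N_v + r X_v are orthogonal to
   the tangent plane and to N, hence multiples l n2 and m n2 of the second unit normal n2.
   Differentiating <II, N> = r I and using the symmetry of third derivatives gives the
   Codazzi relations m e2 = l f2 and m f2 = l g2, where e2, f2, g2 are the coefficients of
   II along n2.  As K = r^2 + (e2 g2 - f2^2) / (EG - F^2), the hypothesis K <> r^2 makes
   this system nondegenerate, so l = m = 0.  Then alpha + N / r is locally constant, hence
   constant on the connected surface, and its distance to alpha is |N| / r = 1 / r. *)

From Stdlib Require Import Reals Lra Nsatz Classical_Prop.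
From Coquelicot Require Import Coquelicot.
(* After Coquelicot, so that its [c0] does not shadow the coordinates of [R4]. *)
Open Scope R_scope.

(** * Vectors of R^4 *)

Definition zero4 : R4 := mkR4 0 0 0 0.
Definition add4 (x y : R4) : R4 := mkR4 (c0 x + c0 y) (c1 x + c1 y) (c2 x + c2 y) (c3 x + c3 y).
Definition scal4 (k : R) (x : R4) : R4 := mkR4 (k * c0 x) (k * c1 x) (k * c2 x) (k * c3 x).

Definition coord4 (j : nat) (x : R4) : R :=
  match j with O => c0 x | 1%nat => c1 x | 2%nat => c2 x | _ => c3 x end.

Lemma R4_ext_coord (x y : R4) : (forall j, coord4 j x = coord4 j y) -> x = y.
Proof.
  destruct x, y; intros H.
  now f_equal; [apply (H 0%nat) | apply (H 1%nat) | apply (H 2%nat) | apply (H 3%nat)].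
Qed.

Lemma coord4_add4 j x y : coord4 j (add4 x y) = coord4 j x + coord4 j y.
Proof. now destruct j as [|[|[|j]]]. Qed.

Lemma coord4_scal4 j k x : coord4 j (scal4 k x) = k * coord4 j x.
Proof. now destruct j as [|[|[|j]]]. Qed.

Lemma scal4_0_l x : scal4 0 x = zero4.
Proof. destruct x; unfold scal4, zero4; simpl; f_equal; ring. Qed.

Lemma coord4_zero4 j : coord4 j zero4 = 0.
Proof. now destruct j as [|[|[|j]]]. Qed.

Lemma dot4_comm x y : dot4 x y = dot4 y x.
Proof. destruct x, y; unfold dot4; simpl; ring. Qed.

Lemma dot4_add4_l x y z : dot4 (add4 x y) z = dot4 x z + dot4 y z.
Proof. destruct x, y, z; unfold dot4; simpl; ring. Qed.

Lemma dot4_add4_r x y z : dot4 x (add4 y z) = dot4 x y + dot4 x z.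
Proof. destruct x, y, z; unfold dot4; simpl; ring. Qed.

Lemma dot4_scal4_l k x y : dot4 (scal4 k x) y = k * dot4 x y.
Proof. destruct x, y; unfold dot4; simpl; ring. Qed.

Lemma dot4_scal4_r k x y : dot4 x (scal4 k y) = k * dot4 x y.
Proof. destruct x, y; unfold dot4; simpl; ring. Qed.

Lemma norm4_sub_add_scal4 x n k :
  dot4 n n = 1 -> 0 <= k -> norm4 (sub4 x (add4 x (scal4 k n))) = k.
Proof.
  intros Hn Hk; unfold norm4.
  replace (dot4 _ _) with (k ^ 2 * dot4 n n)
    by (destruct x, n; unfold dot4; simpl; ring).
  now rewrite Hn, Rmult_1_r, sqrt_pow2.
Qed.

(* The cofactors of the first row of the 4x4 matrix with rows (_, a, b, n). *)
Definition cross4 (a b n : R4) : R4 :=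
  mkR4 (det3 (c1 a) (c2 a) (c3 a) (c1 b) (c2 b) (c3 b) (c1 n) (c2 n) (c3 n))
       (- det3 (c0 a) (c2 a) (c3 a) (c0 b) (c2 b) (c3 b) (c0 n) (c2 n) (c3 n))
       (det3 (c0 a) (c1 a) (c3 a) (c0 b) (c1 b) (c3 b) (c0 n) (c1 n) (c3 n))
       (- det3 (c0 a) (c1 a) (c2 a) (c0 b) (c1 b) (c2 b) (c0 n) (c1 n) (c2 n)).

Section NormalPlane.
Variables a b n : R4.
Hypothesis n_unit : dot4 n n = 1.
Hypothesis n_a : dot4 n a = 0.
Hypothesis n_b : dot4 n b = 0.

Lemma dot4_cross4_a : dot4 (cross4 a b n) a = 0.
Proof. destruct a, b, n; unfold cross4, dot4, det3; simpl; ring. Qed.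

Lemma dot4_cross4_b : dot4 (cross4 a b n) b = 0.
Proof. destruct a, b, n; unfold cross4, dot4, det3; simpl; ring. Qed.

Lemma dot4_cross4_n : dot4 (cross4 a b n) n = 0.
Proof. destruct a, b, n; unfold cross4, dot4, det3; simpl; ring. Qed.

Lemma dot4_cross4_self :
  dot4 (cross4 a b n) (cross4 a b n) = dot4 a a * dot4 b b - dot4 a b ^ 2.
Proof.
  revert n_unit n_a n_b.
  destruct a, b, n; unfold cross4, dot4, det3; simpl; intros; nsatz.
Qed.

Lemma cross4_spans_normal y :
  dot4 y a = 0 -> dot4 y b = 0 -> dot4 y n = 0 ->
  scal4 (dot4 a a * dot4 b b - dot4 a b ^ 2) y
  = scal4 (dot4 y (cross4 a b n)) (cross4 a b n).
Proof.
  revert n_unit n_a n_b.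
  destruct a, b, n, y; unfold scal4, cross4, dot4, det3; simpl; intros.
  f_equal; nsatz.
Qed.

Hypothesis gram_pos : dot4 a a * dot4 b b - dot4 a b ^ 2 > 0.

Lemma second_unit_normal : exists n2 : R4,
  dot4 n2 n2 = 1 /\ dot4 n n2 = 0 /\ dot4 n2 a = 0 /\ dot4 n2 b = 0 /\
  forall y, dot4 y a = 0 -> dot4 y b = 0 -> dot4 y n = 0 -> y = scal4 (dot4 y n2) n2.
Proof.
  set (g := dot4 a a * dot4 b b - dot4 a b ^ 2) in *.
  assert (s_pos : 0 < sqrt g) by (apply sqrt_lt_R0; exact gram_pos).
  assert (s_sq : sqrt g * sqrt g = g) by (apply sqrt_sqrt; lra).
  exists (scal4 (/ sqrt g) (cross4 a b n)).
  repeat split.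
  - rewrite dot4_scal4_l, dot4_scal4_r, dot4_cross4_self; fold g.
    rewrite <- Rmult_assoc, <- Rinv_mult, s_sq; field; lra.
  - now rewrite dot4_scal4_r, dot4_comm, dot4_cross4_n, Rmult_0_r.
  - now rewrite dot4_scal4_l, dot4_cross4_a, Rmult_0_r.
  - now rewrite dot4_scal4_l, dot4_cross4_b, Rmult_0_r.
  - intros y ya yb yn.
    apply R4_ext_coord; intros j.
    pose proof (f_equal (coord4 j) (cross4_spans_normal y ya yb yn)) as Hj.
    rewrite !coord4_scal4 in Hj; fold g in Hj.
    rewrite !coord4_scal4, dot4_scal4_r.
    transitivity (/ g * (g * coord4 j y)); [field; lra|].
    rewrite Hj, <- s_sq at 1; field; lra.
Qed.
End NormalPlane.

(** * Partial derivatives on open subsets of the plane *)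

Lemma is_derive_dot4 (P Q : R -> R4) (x : R) (dP dQ : R4) :
  (forall j, is_derive (fun t => coord4 j (P t)) x (coord4 j dP)) ->
  (forall j, is_derive (fun t => coord4 j (Q t)) x (coord4 j dQ)) ->
  is_derive (fun t => dot4 (P t) (Q t)) x (dot4 dP (Q x) + dot4 (P x) dQ).
Proof.
  intros HP HQ.
  assert (Hj : forall j, is_derive (fun t => coord4 j (P t) * coord4 j (Q t)) x
                  (coord4 j dP * coord4 j (Q x) + coord4 j (P x) * coord4 j dQ))
    by (intros j; exact (is_derive_mult _ _ _ _ _ (HP j) (HQ j) Rmult_comm)).
  replace (dot4 dP (Q x) + dot4 (P x) dQ) with
    (coord4 0 dP * coord4 0 (Q x) + coord4 0 (P x) * coord4 0 dQ
     + (coord4 1 dP * coord4 1 (Q x) + coord4 1 (P x) * coord4 1 dQ)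
     + (coord4 2 dP * coord4 2 (Q x) + coord4 2 (P x) * coord4 2 dQ)
     + (coord4 3 dP * coord4 3 (Q x) + coord4 3 (P x) * coord4 3 dQ))
    by (unfold dot4; simpl; ring).
  exact (is_derive_plus _ _ _ _ _
           (is_derive_plus _ _ _ _ _ (is_derive_plus _ _ _ _ _ (Hj 0%nat) (Hj 1%nat))
              (Hj 2%nat)) (Hj 3%nat)).
Qed.

Section PartialDerivatives.
Variable U : R2 -> Prop.

Lemma smooth_on_pdu g : smooth_on U g -> smooth_on U (pdu g).
Proof. intros H k; exact (proj1 (proj2 (H (S k)))). Qed.

Lemma smooth_on_pdv g : smooth_on U g -> smooth_on U (pdv g).
Proof. intros H k; exact (proj2 (proj2 (H (S k)))). Qed.

Lemma smooth_on_ex_derive_u g p :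
  smooth_on U g -> U p -> ex_derive (fun t => g (t, snd p)) (fst p).
Proof. intros H Hp; exact (proj1 (proj1 (H 1%nat) p Hp)). Qed.

Lemma smooth_on_ex_derive_v g p :
  smooth_on U g -> U p -> ex_derive (fun t => g (fst p, t)) (snd p).
Proof. intros H Hp; exact (proj2 (proj1 (H 1%nat) p Hp)). Qed.

Lemma smooth_on_is_derive_u g p :
  smooth_on U g -> U p -> is_derive (fun t => g (t, snd p)) (fst p) (pdu g p).
Proof. intros H Hp; exact (Derive_correct _ _ (smooth_on_ex_derive_u g p H Hp)). Qed.

Lemma smooth_on_is_derive_v g p :
  smooth_on U g -> U p -> is_derive (fun t => g (fst p, t)) (snd p) (pdv g p).
Proof. intros H Hp; exact (Derive_correct _ _ (smooth_on_ex_derive_v g p H Hp)). Qed.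

Lemma smooth4_on_Du P : smooth4_on U P -> smooth4_on U (Du P).
Proof. intros (H0 & H1 & H2 & H3); repeat split; now apply smooth_on_pdu. Qed.

Lemma smooth4_on_Dv P : smooth4_on U P -> smooth4_on U (Dv P).
Proof. intros (H0 & H1 & H2 & H3); repeat split; now apply smooth_on_pdv. Qed.

Lemma smooth4_on_coord4 P j : smooth4_on U P -> smooth_on U (fun q => coord4 j (P q)).
Proof. intros (H0 & H1 & H2 & H3); now destruct j as [|[|[|j]]]. Qed.

Lemma is_derive_u_coord4 P p j : smooth4_on U P -> U p ->
  is_derive (fun t => coord4 j (P (t, snd p))) (fst p) (coord4 j (Du P p)).
Proof.
  intros HP Hp.
  replace (coord4 j (Du P p)) with (pdu (fun q => coord4 j (P q)) p)
    by now destruct j as [|[|[|j]]].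
  exact (smooth_on_is_derive_u _ p (smooth4_on_coord4 P j HP) Hp).
Qed.

Lemma is_derive_v_coord4 P p j : smooth4_on U P -> U p ->
  is_derive (fun t => coord4 j (P (fst p, t))) (snd p) (coord4 j (Dv P p)).
Proof.
  intros HP Hp.
  replace (coord4 j (Dv P p)) with (pdv (fun q => coord4 j (P q)) p)
    by now destruct j as [|[|[|j]]].
  exact (smooth_on_is_derive_v _ p (smooth4_on_coord4 P j HP) Hp).
Qed.

Lemma is_derive_u_dot4 P Q p : smooth4_on U P -> smooth4_on U Q -> U p ->
  is_derive (fun t => dot4 (P (t, snd p)) (Q (t, snd p))) (fst p)
    (dot4 (Du P p) (Q p) + dot4 (P p) (Du Q p)).
Proof.
  intros HP HQ Hp; destruct p as [x y].
  apply (is_derive_dot4 (fun t => P (t, y)) (fun t => Q (t, y)));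
    intros j; now apply is_derive_u_coord4.
Qed.

Lemma is_derive_v_dot4 P Q p : smooth4_on U P -> smooth4_on U Q -> U p ->
  is_derive (fun t => dot4 (P (fst p, t)) (Q (fst p, t))) (snd p)
    (dot4 (Dv P p) (Q p) + dot4 (P p) (Dv Q p)).
Proof.
  intros HP HQ Hp; destruct p as [x y].
  apply (is_derive_dot4 (fun t => P (x, t)) (fun t => Q (x, t)));
    intros j; now apply is_derive_v_coord4.
Qed.

Hypothesis U_open : open U.

Lemma pdv_pdu_comm g p : smooth_on U g -> U p -> pdv (pdu g) p = pdu (pdv g) p.
Proof.
  intros Hg Hp; destruct p as [x y].
  destruct (U_open (x, y) Hp) as [eps Heps].
  symmetry; apply (Schwarz (fun u v => g (u, v)) x y).
  - exists eps; intros u v hu hv.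
    assert (Huv : U (u, v)) by (apply Heps; split; assumption).
    repeat split.
    + exact (smooth_on_ex_derive_u g _ Hg Huv).
    + exact (smooth_on_ex_derive_v g _ Hg Huv).
    + exact (smooth_on_ex_derive_u _ _ (smooth_on_pdv g Hg) Huv).
    + exact (smooth_on_ex_derive_v _ _ (smooth_on_pdu g Hg) Huv).
  - apply continuity_2d_pt_filterlim.
    exact (smooth_on_pdu _ (smooth_on_pdv g Hg) 0%nat _ Hp).
  - apply continuity_2d_pt_filterlim.
    exact (smooth_on_pdv _ (smooth_on_pdu g Hg) 0%nat _ Hp).
Qed.

Lemma Dv_Du_comm P p : smooth4_on U P -> U p -> Dv (Du P) p = Du (Dv P) p.
Proof.
  intros (H0 & H1 & H2 & H3) Hp; unfold Du, Dv; simpl.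
  f_equal; now apply pdv_pdu_comm.
Qed.

Lemma is_derive_u_unique_on (f g : R2 -> R) p a b : U p ->
  (forall q, U q -> f q = g q) ->
  is_derive (fun t => f (t, snd p)) (fst p) a ->
  is_derive (fun t => g (t, snd p)) (fst p) b -> a = b.
Proof.
  intros Hp Hfg Ha Hb.
  destruct (U_open p Hp) as [eps Heps].
  apply (is_derive_ext_loc _ (fun t => g (t, snd p))) in Ha.
  - now rewrite <- (is_derive_unique _ _ _ Ha), <- (is_derive_unique _ _ _ Hb).
  - exists eps; intros t Ht; apply Hfg, Heps; split; [exact Ht | apply ball_center].
Qed.

Lemma is_derive_v_unique_on (f g : R2 -> R) p a b : U p ->
  (forall q, U q -> f q = g q) ->
  is_derive (fun t => f (fst p, t)) (snd p) a ->
  is_derive (fun t => g (fst p, t)) (snd p) b -> a = b.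
Proof.
  intros Hp Hfg Ha Hb.
  destruct (U_open p Hp) as [eps Heps].
  apply (is_derive_ext_loc _ (fun t => g (fst p, t))) in Ha.
  - now rewrite <- (is_derive_unique _ _ _ Ha), <- (is_derive_unique _ _ _ Hb).
  - exists eps; intros t Ht; apply Hfg, Heps; split; [apply ball_center | exact Ht].
Qed.

Lemma Du_dot4_const P Q c p : smooth4_on U P -> smooth4_on U Q -> U p ->
  (forall q, U q -> dot4 (P q) (Q q) = c) ->
  dot4 (Du P p) (Q p) + dot4 (P p) (Du Q p) = 0.
Proof.
  intros HP HQ Hp H.
  exact (is_derive_u_unique_on _ _ p _ _ Hp H (is_derive_u_dot4 P Q p HP HQ Hp)
           (is_derive_const c _)).
Qed.

Lemma Dv_dot4_const P Q c p : smooth4_on U P -> smooth4_on U Q -> U p ->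
  (forall q, U q -> dot4 (P q) (Q q) = c) ->
  dot4 (Dv P p) (Q p) + dot4 (P p) (Dv Q p) = 0.
Proof.
  intros HP HQ Hp H.
  exact (is_derive_v_unique_on _ _ p _ _ Hp H (is_derive_v_dot4 P Q p HP HQ Hp)
           (is_derive_const c _)).
Qed.

Lemma Du_dot4_scal P Q P' Q' k p :
  smooth4_on U P -> smooth4_on U Q -> smooth4_on U P' -> smooth4_on U Q' -> U p ->
  (forall q, U q -> dot4 (P q) (Q q) = k * dot4 (P' q) (Q' q)) ->
  dot4 (Du P p) (Q p) + dot4 (P p) (Du Q p)
  = k * (dot4 (Du P' p) (Q' p) + dot4 (P' p) (Du Q' p)).
Proof.
  intros HP HQ HP' HQ' Hp H.
  exact (is_derive_u_unique_on _ _ p _ _ Hp H (is_derive_u_dot4 P Q p HP HQ Hp)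
           (is_derive_scal _ _ k _ (is_derive_u_dot4 P' Q' p HP' HQ' Hp))).
Qed.

Lemma Dv_dot4_scal P Q P' Q' k p :
  smooth4_on U P -> smooth4_on U Q -> smooth4_on U P' -> smooth4_on U Q' -> U p ->
  (forall q, U q -> dot4 (P q) (Q q) = k * dot4 (P' q) (Q' q)) ->
  dot4 (Dv P p) (Q p) + dot4 (P p) (Dv Q p)
  = k * (dot4 (Dv P' p) (Q' p) + dot4 (P' p) (Dv Q' p)).
Proof.
  intros HP HQ HP' HQ' Hp H.
  exact (is_derive_v_unique_on _ _ p _ _ Hp H (is_derive_v_dot4 P Q p HP HQ Hp)
           (is_derive_scal _ _ k _ (is_derive_v_dot4 P' Q' p HP' HQ' Hp))).
Qed.

End PartialDerivatives.

Lemma ball_R_between (c a b t : R) (eps : posreal) :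
  ball c eps a -> ball c eps b -> Rmin a b <= t <= Rmax a b -> ball c eps t.
Proof.
  change (ball c eps ?x) with (Rabs (x - c) < eps).
  unfold Rmin, Rmax, Rabs; destruct (Rle_dec a b);
    repeat destruct Rcase_abs; intros; lra.
Qed.

Lemma eq_of_zero_derive (f : R -> R) a b :
  (forall t, Rmin a b <= t <= Rmax a b -> is_derive f t 0) -> f a = f b.
Proof.
  intros H; destruct (Rtotal_order a b) as [Hab | [<- | Hba]]; [| reflexivity |].
  - apply eq_is_derive; [intros t Ht; apply H | exact Hab].
    rewrite Rmin_left, Rmax_right; lra.
  - symmetry; apply eq_is_derive; [intros t Ht; apply H | exact Hba].
    rewrite Rmin_right, Rmax_left; lra.
Qed.

Lemma zero_partials_const_on_ball (w : R2 -> R) (p : R2) (eps : posreal) :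
  (forall q, ball p eps q ->
     is_derive (fun t => w (t, snd q)) (fst q) 0 /\
     is_derive (fun t => w (fst q, t)) (snd q) 0) ->
  forall q, ball p eps q -> w q = w p.
Proof.
  destruct p as [p1 p2]; intros H [q1 q2] [Hq1 Hq2]; simpl in *.
  transitivity (w (q1, p2)).
  - apply (eq_of_zero_derive (fun t => w (q1, t))); intros t Ht.
    apply (H (q1, t)); split; [exact Hq1 |].
    exact (ball_R_between _ _ _ _ _ Hq2 (ball_center _ _) Ht).
  - apply (eq_of_zero_derive (fun t => w (t, p2))); intros t Ht.
    apply (H (t, p2)); split; [| apply ball_center].
    exact (ball_R_between _ _ _ _ _ Hq1 (ball_center _ _) Ht).
Qed.

(** * Surfaces of constant projection *)

Lemma homogeneous_2x2_trivial (e f g l m : R) :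
  e * g - f ^ 2 <> 0 -> m * e = l * f -> m * f = l * g -> l = 0 /\ m = 0.
Proof.
  intros Hdet H1 H2; split; apply (Rmult_eq_reg_l (e * g - f ^ 2)); auto.
  - replace ((e * g - f ^ 2) * l) with (e * (l * g) - f * (l * f)) by ring.
    rewrite <- H1, <- H2; ring.
  - replace ((e * g - f ^ 2) * m) with (g * (m * e) - f * (m * f)) by ring.
    rewrite H1, H2; ring.
Qed.

Lemma gauss_K_constant_projection (X : R2 -> R4) (p : R2) (n1 n2 : R4) (r : R) :
  fE X p * fG X p - fF X p ^ 2 <> 0 ->
  e1 X p n1 = r * fE X p -> f1 X p n1 = r * fF X p -> g1 X p n1 = r * fG X p ->
  gauss_K X p n1 n2
  = r ^ 2 + (e2 X p n2 * g2 X p n2 - f2 X p n2 ^ 2) / (fE X p * fG X p - fF X p ^ 2).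
Proof.
  intros Hdet He Hf Hg; unfold gauss_K.
  rewrite He, Hf, Hg; field; exact Hdet.
Qed.

Section ConstantProjectionChart.
Variables (U : R2 -> Prop) (X N : R2 -> R4) (r : R).
Hypothesis U_open : open U.
Hypothesis X_smooth : smooth4_on U X.
Hypothesis N_smooth : smooth4_on U N.
Hypothesis X_immersion : forall q, U q -> fE X q * fG X q - fF X q ^ 2 > 0.
Hypothesis N_projection : forall q, U q ->
  dot4 (N q) (N q) = 1 /\ dot4 (N q) (Du X q) = 0 /\ dot4 (N q) (Dv X q) = 0 /\
  forall du dv : R,
    dot4 (Xuu X q) (N q) * du ^ 2 + 2 * dot4 (Xuv X q) (N q) * du * dv
    + dot4 (Xvv X q) (N q) * dv ^ 2
    = r * (fE X q * du ^ 2 + 2 * fF X q * du * dv + fG X q * dv ^ 2).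
Hypothesis K_ne : forall q n1 n2, U q -> normal_frame X q n1 n2 -> gauss_K X q n1 n2 <> r ^ 2.

Lemma N_unit q : U q -> dot4 (N q) (N q) = 1.
Proof. intros Hq; apply (N_projection q Hq). Qed.

Lemma N_normal_u q : U q -> dot4 (N q) (Du X q) = 0.
Proof. intros Hq; apply (N_projection q Hq). Qed.

Lemma N_normal_v q : U q -> dot4 (N q) (Dv X q) = 0.
Proof. intros Hq; apply (N_projection q Hq). Qed.

Lemma second_fundamental_N q : U q ->
  dot4 (Xuu X q) (N q) = r * fE X q /\ dot4 (Xuv X q) (N q) = r * fF X q /\
  dot4 (Xvv X q) (N q) = r * fG X q.
Proof.
  intros Hq; destruct (N_projection q Hq) as (_ & _ & _ & H).
  pose proof (H 1 0) as H10; pose proof (H 0 1) as H01; pose proof (H 1 1) as H11.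
  repeat split; lra.
Qed.

Let Xu_smooth := smooth4_on_Du U X X_smooth.
Let Xv_smooth := smooth4_on_Dv U X X_smooth.

Lemma weingarten_normal_part p : U p ->
  dot4 (Du N p) (Du X p) = - r * fE X p /\ dot4 (Du N p) (Dv X p) = - r * fF X p /\
  dot4 (Du N p) (N p) = 0 /\
  dot4 (Dv N p) (Du X p) = - r * fF X p /\ dot4 (Dv N p) (Dv X p) = - r * fG X p /\
  dot4 (Dv N p) (N p) = 0.
Proof.
  intros Hp.
  destruct (second_fundamental_N p Hp) as (IIe & IIf & IIg).
  pose proof (Dv_Du_comm U U_open X p X_smooth Hp) as Xvu.
  pose proof (Du_dot4_const U U_open _ _ 0 p N_smooth Xu_smooth Hp N_normal_u) as Nu_Xu.
  pose proof (Du_dot4_const U U_open _ _ 0 p N_smooth Xv_smooth Hp N_normal_v) as Nu_Xv.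
  pose proof (Du_dot4_const U U_open _ _ 1 p N_smooth N_smooth Hp N_unit) as Nu_N.
  pose proof (Dv_dot4_const U U_open _ _ 0 p N_smooth Xu_smooth Hp N_normal_u) as Nv_Xu.
  pose proof (Dv_dot4_const U U_open _ _ 0 p N_smooth Xv_smooth Hp N_normal_v) as Nv_Xv.
  pose proof (Dv_dot4_const U U_open _ _ 1 p N_smooth N_smooth Hp N_unit) as Nv_N.
  unfold Xuu, Xuv, Xvv in *; rewrite <- Xvu in *.
  rewrite !(dot4_comm (N p)) in *.
  repeat split; lra.
Qed.

Lemma codazzi p : U p ->
  dot4 (Xuu X p) (add4 (Dv N p) (scal4 r (Dv X p)))
  = dot4 (Xuv X p) (add4 (Du N p) (scal4 r (Du X p))) /\
  dot4 (Xuv X p) (add4 (Dv N p) (scal4 r (Dv X p)))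
  = dot4 (Xvv X p) (add4 (Du N p) (scal4 r (Du X p))).
Proof.
  intros Hp.
  pose proof (smooth4_on_Du U _ Xu_smooth) as Xuu_smooth.
  pose proof (smooth4_on_Dv U _ Xu_smooth) as Xuv_smooth.
  pose proof (smooth4_on_Du U _ Xv_smooth) as Xvu_smooth.
  pose proof (smooth4_on_Dv U _ Xv_smooth) as Xvv_smooth.
  assert (IIvu : forall q, U q -> dot4 (Du (Dv X) q) (N q) = r * dot4 (Du X q) (Dv X q)).
  { intros q Hq; rewrite <- (Dv_Du_comm U U_open X q X_smooth Hq).
    apply (second_fundamental_N q Hq). }
  pose proof (Dv_dot4_scal U U_open _ _ _ _ r p Xuu_smooth N_smooth Xu_smooth Xu_smooth Hp
                (fun q Hq => proj1 (second_fundamental_N q Hq))) as Dv_IIe.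
  pose proof (Du_dot4_scal U U_open _ _ _ _ r p Xuv_smooth N_smooth Xu_smooth Xv_smooth Hp
                (fun q Hq => proj1 (proj2 (second_fundamental_N q Hq)))) as Du_IIf.
  pose proof (Dv_dot4_scal U U_open _ _ _ _ r p Xvu_smooth N_smooth Xu_smooth Xv_smooth Hp
                IIvu) as Dv_IIf.
  pose proof (Du_dot4_scal U U_open _ _ _ _ r p Xvv_smooth N_smooth Xv_smooth Xv_smooth Hp
                (fun q Hq => proj2 (proj2 (second_fundamental_N q Hq)))) as Du_IIg.
  rewrite (Dv_Du_comm U U_open _ p Xu_smooth Hp) in Dv_IIe.
  rewrite (Dv_Du_comm U U_open _ p Xv_smooth Hp) in Dv_IIf.
  rewrite <- (Dv_Du_comm U U_open X p X_smooth Hp) in Du_IIf, Dv_IIf, Du_IIg.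
  unfold Xuu, Xuv, Xvv.
  rewrite !dot4_add4_r, !dot4_scal4_r.
  rewrite (dot4_comm (Dv (Du X) p) (Du X p)) in Dv_IIe |- *.
  rewrite (dot4_comm (Dv X p) (Dv (Du X) p)) in Du_IIg.
  rewrite (dot4_comm (Dv (Dv X) p) (Du X p)).
  split; lra.
Qed.

Lemma N_umbilic p : U p ->
  add4 (Du N p) (scal4 r (Du X p)) = zero4 /\ add4 (Dv N p) (scal4 r (Dv X p)) = zero4.
Proof.
  intros Hp.
  destruct (second_unit_normal (Du X p) (Dv X p) (N p) (N_unit p Hp) (N_normal_u p Hp)
              (N_normal_v p Hp) (X_immersion p Hp))
    as (n2 & n2_unit & N_n2 & n2_u & n2_v & normal_line).
  destruct (weingarten_normal_part p Hp) as (Nu_u & Nu_v & Nu_N & Nv_u & Nv_v & Nv_N).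
  destruct (codazzi p Hp) as [codazzi_u codazzi_v].
  set (A := add4 (Du N p) (scal4 r (Du X p))) in *.
  set (B := add4 (Dv N p) (scal4 r (Dv X p))) in *.
  assert (A_line : A = scal4 (dot4 A n2) n2).
  { apply normal_line; unfold A; rewrite dot4_add4_l, dot4_scal4_l.
    - unfold fE in Nu_u; lra.
    - unfold fF in Nu_v; lra.
    - now rewrite (dot4_comm (Du X p)), (N_normal_u p Hp), Nu_N, Rmult_0_r, Rplus_0_r. }
  assert (B_line : B = scal4 (dot4 B n2) n2).
  { apply normal_line; unfold B; rewrite dot4_add4_l, dot4_scal4_l.
    - rewrite (dot4_comm (Dv X p)); unfold fF in Nv_u; lra.
    - unfold fG in Nv_v; lra.
    - now rewrite (dot4_comm (Dv X p)), (N_normal_v p Hp), Nv_N, Rmult_0_r, Rplus_0_r. }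
  assert (II_n2_nondegenerate : e2 X p n2 * g2 X p n2 - f2 X p n2 ^ 2 <> 0).
  { intros Hdeg.
    destruct (second_fundamental_N p Hp) as (IIe & IIf & IIg).
    apply (K_ne p (N p) n2 Hp).
    - unfold normal_frame; repeat split; auto using N_unit, N_normal_u, N_normal_v.
    - pose proof (X_immersion p Hp) as Hgram.
      rewrite (gauss_K_constant_projection X p (N p) n2 r) by (auto; lra).
      rewrite Hdeg; unfold Rdiv; ring. }
  rewrite A_line, B_line, !dot4_scal4_r in codazzi_u, codazzi_v.
  destruct (homogeneous_2x2_trivial _ _ _ _ _ II_n2_nondegenerate codazzi_u codazzi_v)
    as [A_n2 B_n2].
  now rewrite A_line, B_line, A_n2, B_n2, !scal4_0_l.
Qed.

Hypothesis r_neq0 : r <> 0.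

Lemma center_zero_partials j q : U q ->
  is_derive (fun t => coord4 j (add4 (X (t, snd q)) (scal4 (/ r) (N (t, snd q))))) (fst q) 0 /\
  is_derive (fun t => coord4 j (add4 (X (fst q, t)) (scal4 (/ r) (N (fst q, t))))) (snd q) 0.
Proof.
  intros Hq; destruct (N_umbilic q Hq) as [Nu Nv].
  apply (f_equal (coord4 j)) in Nu, Nv.
  rewrite coord4_add4, coord4_scal4, coord4_zero4 in Nu, Nv.
  split.
  - eapply is_derive_ext; [intros t; symmetry; rewrite coord4_add4, coord4_scal4; reflexivity |].
    assert (E : coord4 j (Du X q) + / r * coord4 j (Du N q) = 0)
      by (rewrite <- (Rmult_0_r (/ r)), <- Nu; field; exact r_neq0).
    rewrite <- E.
    exact (is_derive_plus _ _ _ _ _ (is_derive_u_coord4 U X q j X_smooth Hq)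
             (is_derive_scal _ _ _ _ (is_derive_u_coord4 U N q j N_smooth Hq))).
  - eapply is_derive_ext; [intros t; symmetry; rewrite coord4_add4, coord4_scal4; reflexivity |].
    assert (E : coord4 j (Dv X q) + / r * coord4 j (Dv N q) = 0)
      by (rewrite <- (Rmult_0_r (/ r)), <- Nv; field; exact r_neq0).
    rewrite <- E.
    exact (is_derive_plus _ _ _ _ _ (is_derive_v_coord4 U X q j X_smooth Hq)
             (is_derive_scal _ _ _ _ (is_derive_v_coord4 U N q j N_smooth Hq))).
Qed.

Lemma center_locally_constant p : U p ->
  locally p (fun q => U q /\
    add4 (X q) (scal4 (/ r) (N q)) = add4 (X p) (scal4 (/ r) (N p))).
Proof.
  intros Hp; destruct (U_open p Hp) as [eps Heps].
  exists eps; intros q Hq; split; [exact (Heps q Hq) |].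
  apply R4_ext_coord; intros j.
  apply (zero_partials_const_on_ball (fun q => coord4 j (add4 (X q) (scal4 (/ r) (N q)))) p eps);
    [intros q' Hq'; exact (center_zero_partials j q' (Heps q' Hq')) | exact Hq].
Qed.

End ConstantProjectionChart.

Lemma connected_locally_constant {M T : Type} (U : nat -> R2 -> Prop) (phi : nat -> R2 -> M)
  (W : M -> T) :
  M_connected U phi ->
  (forall i p, U i p -> locally p (fun q => U i q /\ W (phi i q) = W (phi i p))) ->
  forall x y, W x = W y.
Proof.
  intros Hconn Hloc x y.
  assert (level_open : forall P : T -> Prop, M_open U phi (fun z => P (W z))).
  { intros P i p [Hp HP].
    apply (filter_imp (fun q => U i q /\ W (phi i q) = W (phi i p))); [| exact (Hloc i p Hp)].
    intros q [Hq E]; split; [exact Hq | now rewrite E]. }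
  destruct (Hconn (fun z => W z = W y) (level_open (fun t => t = W y))
              (level_open (fun t => t <> W y))) as [Hall | Hnone].
  - exact (Hall x).
  - now destruct (Hnone y).
Qed.

Theorem theorem3p2 (M : Type) (U : nat -> R2 -> Prop) (phi : nat -> R2 -> M)
  (alpha : M -> R4) (r : R) :
  smooth_oriented_surface U phi ->
  M_connected U phi ->
  smooth_immersion U phi alpha ->
  global_orthogonal_asymptotic_lines U phi alpha ->
  0 < r ->
  constant_projection U phi alpha r ->
  gauss_curv_ne U phi alpha (r ^ 2) ->
  exists c : R4, forall x : M, norm4 (sub4 (alpha x) c) = / r.
Proof.
  intros (U_open & _ & charts_cover & _) Hconn Himm _ Hr [nu Hnu] HK.
  set (center := fun x => add4 (alpha x) (scal4 (/ r) (nu x))).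
  assert (center_const : forall x y, center x = center y).
  { apply (connected_locally_constant U phi center Hconn); intros i p Hp.
    exact (center_locally_constant (U i) (fun q => alpha (phi i q)) (fun q => nu (phi i q)) r
             (U_open i) (proj1 (Himm i)) (proj1 (Hnu i)) (proj2 (Himm i)) (proj2 (Hnu i))
             (HK i) (Rgt_not_eq _ _ Hr) p Hp). }
  destruct (classic (inhabited M)) as [[x0] | M_empty].
  - exists (center x0); intros x.
    rewrite <- (center_const x x0).
    destruct (charts_cover x) as (i & p & Hp & <-).
    apply norm4_sub_add_scal4; [apply (proj2 (Hnu i) p Hp) | left; now apply Rinv_0_lt_compat].
  - exists zero4; intros x; destruct (M_empty (inhabits x)).
Qed.
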